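(* Consider the distributed quantized weight-balancing algorithm described in the context on a strongly connected digraph, with step-size $\gamma(k)=2^{-n}$ for $2^n-1\le k\le 2^{n+1}-2$. Let $\mathcal{V}^+(k)=\{i\in\mathcal{V}:b_i(k)\ge0\}$ and $\mathcal{V}^{--}(k)=\{i\in\mathcal{V}:b_i(k)<0\}$. If the decreasing event $\mathcal{D}_k$ does not occur, then $\mathcal{V}^+(k+1)=\mathcal{V}^+(k)$ and $\mathcal{V}^{--}(k+1)=\mathcal{V}^{--}(k)$.
   Context: $\mathcal{G}=(\mathcal{V},\mathcal{E})$, $\mathcal{V}=\{1,\dots,N\}$, no self-loops; $\mathcal{N}_i^-=\{j:(j,i)\in\mathcal{E}\}$, $\mathcal{N}_i^+=\{j:(i,j)\in\mathcal{E}\}$, $d_i^+=|\mathcal{N}_i^+|$. Algorithm: $a_{ij}(0)=1$ if $j\in\mathcal{N}_i^-$ and $0$ otherwise; $b_i(k)=\sum_{j\in\mathcal{N}_i^-}a_{ij}(k)-\sum_{j\in\mathcal{N}_i^+}a_{ji}(k)$; $n_i(k)=1$ if $b_i(k)\ge d_i^+\gamma(k)$, else $0$; $a_{ij}(k+1)=a_{ij}(k)+n_j(k)\gamma(k)$ for $j\in\mathcal{N}_i^-$. The decreasing event $\mathcal{D}_k$: there exist $i\in\mathcal{V}$ and $j\in\mathcal{N}_i^+$ with $n_i(k)>0$ and $b_j(k)<0$. *)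

From HB Require Import structures.
From mathcomp Require Import all_boot all_order all_algebra.
Set Implicit Arguments. Unset Strict Implicit. Unset Printing Implicit Defensive.
Import Order.TTheory GRing.Theory Num.Theory.
Local Open Scope ring_scope.

Section QWB.
Variables (R : realFieldType) (N : nat).
(* E j i = true  iff  (j,i) is an edge of the digraph on V = 'I_N *)
Variable E : rel 'I_N.

(* step size: gamma(k) = 2^{-n} for 2^n - 1 <= k <= 2^{n+1} - 2,
   i.e. n = floor(log2 (k+1)) *)
Definition gamma (k : nat) : R := ((2 ^ trunc_log 2 k.+1)%N%:R)^-1.

Definition outdeg (i : 'I_N) : nat := #|[set j | E i j]|.

Definition imbalance (a : 'I_N -> 'I_N -> R) (i : 'I_N) : R :=
  \sum_(j | E j i) a i j - \sum_(j | E i j) a j i.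

Definition nflag (a : 'I_N -> 'I_N -> R) (g : R) (i : 'I_N) : R :=
  if (outdeg i)%:R * g <= imbalance a i then 1 else 0.

Fixpoint weights (k : nat) : 'I_N -> 'I_N -> R :=
  match k with
  | 0%N => fun i j => if E j i then 1 else 0
  | k'.+1 => let a := weights k' in
             fun i j => if E j i then a i j + nflag a (gamma k') j * gamma k'
                        else a i j
  end.

Definition b (k : nat) (i : 'I_N) : R := imbalance (weights k) i.
Definition n (k : nat) (i : 'I_N) : R := nflag (weights k) (gamma k) i.

Definition decreasing_event (k : nat) : Prop :=
  exists i j, E i j /\ 0 < n k i /\ b k j < 0.

Definition Vplus (k : nat) : {set 'I_N} := [set i | 0 <= b k i].
Definition Vminus (k : nat) : {set 'I_N} := [set i | b k i < 0].
End QWB.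

Definition no_self_loops (N : nat) (E : rel 'I_N) := forall i, ~~ E i i.
Definition strongly_connected (N : nat) (E : rel 'I_N) :=
  forall i j, connect E i j.

From Pilot Require Import Defs.
From HB Require Import structures.
From mathcomp Require Import all_boot all_order all_algebra.
Import Order.TTheory GRing.Theory Num.Theory.
Local Open Scope ring_scope.

(* A node with b_i >= 0 stays nonnegative at every step, whether or not D_k
   occurs: it only gives away d_i^+ gamma when its imbalance is at least that
   much, and otherwise it can only receive.  A node with b_i < 0 never gives
   anything away, and when D_k fails none of its in-neighbours does either, so
   its imbalance does not move. *)

Section OneStep.
Variables (R : realFieldType) (N : nat) (E : rel 'I_N) (k : nat).

Local Notation b := (b R E).
Local Notation n := (n R E k).
Local Notation gamma := (gamma R k).

Lemma gamma_ge0 : 0 <= gamma.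
Proof. by rewrite invr_ge0 ler0n. Qed.

Lemma nE i : n i = ((outdeg E i)%:R * gamma <= b k i)%R%:R.
Proof. by rewrite /n /nflag; case: ifP. Qed.

Lemma n_ge0 i : 0 <= n i.
Proof. by rewrite nE ler0n. Qed.

Lemma n_eq0_of_b_lt0 i : b k i < 0 -> n i = 0.
Proof.
move=> b_lt0; rewrite nE; case: lerP => // flow_le_b.
have := le_lt_trans flow_le_b b_lt0.
by rewrite ltNge mulr_ge0 ?ler0n ?gamma_ge0.
Qed.

Lemma b_succ i :
  b k.+1 i = b k i + \sum_(j | E j i) n j * gamma
                   - (outdeg E i)%:R * (n i * gamma).
Proof.
rewrite /Defs.b /imbalance /=.
under eq_bigr => j Eji do rewrite Eji.
under [X in _ - X = _]eq_bigr => j Eij do rewrite Eij.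
rewrite !big_split /= -/(Defs.n R E k _).
have -> : \sum_(j | E i j) n i * gamma = (outdeg E i)%:R * (n i * gamma).
  rewrite sumr_const mulr_natl /outdeg; congr (_ *+ _).
  by apply: eq_card => j; rewrite inE.
by rewrite opprD addrACA addrA.
Qed.

Lemma b_succ_ge0 i : 0 <= b k i -> 0 <= b k.+1 i.
Proof.
move=> b_ge0; rewrite b_succ addrAC addr_ge0 //; last first.
  by rewrite sumr_ge0 // => j _; rewrite mulr_ge0 ?n_ge0 ?gamma_ge0.
rewrite nE.
case: (lerP ((outdeg E i)%:R * gamma) (b k i)) => [flow_le_b | _] /=.
- by rewrite mul1r subr_ge0.
- by rewrite mul0r mulr0 subr0.
Qed.

Lemma n_in_neighbour_eq0 {i j} :
  ~ decreasing_event R E k -> b k i < 0 -> E j i -> n j = 0.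
Proof.
move=> noD b_lt0 Eji; apply/eqP; rewrite eq_le n_ge0 andbT leNgt.
by apply/negP => n_gt0; apply: noD; exists j, i.
Qed.

Lemma b_succ_eq_of_b_lt0 i :
  ~ decreasing_event R E k -> b k i < 0 -> b k.+1 i = b k i.
Proof.
move=> noD b_lt0; rewrite b_succ n_eq0_of_b_lt0 // mul0r mulr0 subr0.
rewrite big1 ?addr0 // => j Eji.
by rewrite (n_in_neighbour_eq0 noD b_lt0 Eji) mul0r.
Qed.

Lemma b_succ_ge0E i :
  ~ decreasing_event R E k -> (0 <= b k.+1 i) = (0 <= b k i).
Proof.
move=> noD; case: (ltrP (b k i) 0) => [b_lt0 | /b_succ_ge0 //].
by rewrite b_succ_eq_of_b_lt0 // leNgt b_lt0.
Qed.

End OneStep.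

Theorem lemma2 (R : realFieldType) (N : nat) (E : rel 'I_N)
  (hloop : no_self_loops E) (hsc : strongly_connected E) (k : nat) :
  ~ decreasing_event R E k ->
  Vplus R E k.+1 = Vplus R E k /\ Vminus R E k.+1 = Vminus R E k.
Proof.
move=> noD; split; apply/setP => i; rewrite !inE.
- exact: b_succ_ge0E.
- by rewrite !ltNge b_succ_ge0E.
Qed.
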